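(* For all integers $n\ge2$ and $1\le p\le n-1$, $$2|\mathbb{S}^n|\ >\ \Big|\mathbb{S}^p\big(\sqrt{p/n}\big)\times\mathbb{S}^{n-p}\big(\sqrt{(n-p)/n}\big)\Big|\ \ge\ \Big|\mathbb{S}^{\lfloor n/2\rfloor}\big(\sqrt{\lfloor n/2\rfloor/n}\big)\times\mathbb{S}^{\lceil n/2\rceil}\big(\sqrt{\lceil n/2\rceil/n}\big)\Big|.$$
   Context: $\mathbb{S}^d(R)$ denotes the round $d$-sphere of radius $R$, $\mathbb{S}^d=\mathbb{S}^d(1)$, and $|\cdot|$ denotes $n$-dimensional volume; $|\mathbb{S}^d|=2\pi^{(d+1)/2}/\Gamma(\tfrac{d+1}{2})$. *)

From Stdlib Require Import Reals Lra Lia.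
Open Scope R_scope.

(* Gamma at half-integers: half_gamma m = Gamma(m/2) for m >= 1.
   Determined by Gamma(1/2) = sqrt PI, Gamma(1) = 1, Gamma(x+1) = x Gamma(x).
   (Stdlib has no Gamma function; value at m = 0 is a dummy, never used.) *)
Fixpoint half_gamma (m : nat) : R :=
  match m with
  | O => 1
  | S O => sqrt PI
  | S (S O) => 1
  | S (S k as m') => (INR k / 2) * half_gamma k
  end.

(* |S^d| = 2 pi^((d+1)/2) / Gamma((d+1)/2) *)
Definition sphere_vol (d : nat) : R :=
  2 * Rpower PI (INR (d + 1) / 2) / half_gamma (d + 1).

(* |S^d(R)| = R^d |S^d|  (d-dimensional volume scales by R^d) *)
Definition sphere_vol_r (d : nat) (r : R) : R := r ^ d * sphere_vol d.

Definition prod_sphere_vol (p : nat) (r1 : R) (q : nat) (r2 : R) : R :=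
  sphere_vol_r p r1 * sphere_vol_r q r2.

Definition clifford_vol (n p : nat) : R :=
  prod_sphere_vol p (sqrt (INR p / INR n)) (n - p) (sqrt (INR (n - p) / INR n)).

(* Taking logarithms, ln |S^k(sqrt(k/n))| = lam k - (k/2) ln n + ln 2
   + ((k+1)/2) ln pi with the n-independent profile
     lam k = (k/2) ln k - ln Gamma((k+1)/2),
   so both inequalities reduce to statements about E(p) = lam p + lam (n-p):
   (1) E(p) < (n/2) ln n - ln Gamma((n+1)/2) - (ln pi)/2, and
   (2) E(p) >= E(floor(n/2)).
   The analytic input consists of two facts about lam:
   - the two-step increments lam (k+2) - lam k grow with k; they are given by
     an explicit profile whose monotonicity and concavity reduce, in the
     variable t = 1/x, to two elementary log inequalities proved by
     differentiating twice;
   - lam is discretely convex; this follows from that concavity together with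
     the log-convexity of Gamma on half-integers, obtained from the
     monotonicity of the Wallis integrals int_0^(pi/2) sin^k.
   Hence E decreases as p moves towards n/2 (giving (2)), and (1) reduces to
   the base cases p = 1 and p = 2.  The file proceeds in this order: calculus
   lemmas, the log inequalities, Wallis integrals and Gamma, the profile lam,
   the exponent E, and finally the translation back to volumes. *)

From Stdlib Require Import Reals Lra Lia ZArith.
From Coquelicot Require Import Coquelicot.
Open Scope R_scope.

Lemma nonneg_of_second_derivative (h h1 h2 : R -> R) (T : R) :
  (forall t, 0 <= t <= T -> derivable_pt_lim h t (h1 t)) ->
  (forall t, 0 <= t <= T -> derivable_pt_lim h1 t (h2 t)) ->
  (forall t, 0 <= t <= T -> 0 <= h2 t) ->
  h 0 = 0 -> h1 0 = 0 -> forall t, 0 <= t <= T -> 0 <= h t.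
Proof.
  intros Dh Dh1 h2_ge0 h0 h10.
  assert (nonneg_from_derivative : forall f f' : R -> R, f 0 = 0 ->
            (forall t, 0 <= t <= T -> derivable_pt_lim f t (f' t)) ->
            (forall t, 0 <= t <= T -> 0 <= f' t) ->
            forall t, 0 <= t <= T -> 0 <= f t).
  { intros f f' f0 Df f'_ge0 t Ht. destruct (Req_dec t 0) as [->|Hne]; [lra|].
    destruct (MVT_cor2 f f' 0 t) as [c [Hc ?]]; [lra| intros c ?; apply Df; lra |].
    assert (0 <= f' c) by (apply f'_ge0; lra). nra. }
  apply (nonneg_from_derivative h h1 h0 Dh).
  exact (nonneg_from_derivative h1 h2 h10 Dh1 h2_ge0).
Qed.

(* For the profile
   F = [step_profile] below, x * concavity_gap (1/x) = 2 F(x) - F(x-1) - F(x+1)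
   and x * increment_gap (1/x) = F(x+1) - F(x); the primed functions are the
   first and second derivatives, used to apply [nonneg_of_second_derivative]. *)
Definition concavity_gap (t : R) : R :=
  (2 + 6*t) * ln (1 + 2*t) + (1 - t) * ln (1 - t)
  - (1 + 3*t) * ln (1 + 3*t) - 4*t * ln (1 + t).

Definition concavity_gap' (t : R) : R :=
  6 * ln (1 + 2*t) + 2 * (2 + 6*t) / (1 + 2*t) - ln (1 - t) - 1
  - 3 * ln (1 + 3*t) - 3 - 4 * ln (1 + t) - 4*t / (1 + t).

Definition concavity_gap'' (t : R) : R :=
  12 / (1 + 2*t) + 4 / (1 + 2*t)^2 + 1 / (1 - t)
  - 9 / (1 + 3*t) - 4 / (1 + t) - 4 / (1 + t)^2.

Lemma concavity_gap_nonneg (t : R) : 0 <= t <= 1/2 -> 0 <= concavity_gap t.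
Proof.
  apply (nonneg_of_second_derivative _ concavity_gap' concavity_gap'' (1/2)).
  - intros s Hs. apply is_derive_Reals. unfold concavity_gap, concavity_gap'.
    auto_derive; [repeat split; lra|].
    unfold Rminus. field. repeat split; lra.
  - intros s Hs. apply is_derive_Reals. unfold concavity_gap', concavity_gap''.
    auto_derive; [repeat split; lra|].
    unfold Rminus. field. repeat split; lra.
  - intros s Hs. unfold concavity_gap''.
    replace (12 / (1 + 2*s) + 4 / (1 + 2*s)^2 + 1 / (1 - s)
             - 9 / (1 + 3*s) - 4 / (1 + s) - 4 / (1 + s)^2)
      with ((40*s^3 + 80*s^4 + 24*s^5) / ((1 + 2*s)^2 * (1 - s) * (1 + 3*s) * (1 + s)^2))
      by (field; lra).
    apply Rdiv_le_0_compat.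
    + assert (0 <= s^3) by (apply pow_le; lra).
      assert (0 <= s^4) by (apply pow_le; lra).
      assert (0 <= s^5) by (apply pow_le; lra). lra.
    + assert (0 < (1 + 2*s)^2) by (apply pow_lt; lra).
      assert (0 < (1 + s)^2) by (apply pow_lt; lra).
      repeat apply Rmult_lt_0_compat; lra.
  - unfold concavity_gap. rewrite ?Rmult_0_r, ?Rplus_0_r, ?Rminus_0_r, ln_1. ring.
  - unfold concavity_gap'. rewrite ?Rmult_0_r, ?Rplus_0_r, ?Rminus_0_r, ln_1. field.
Qed.

Definition increment_gap (t : R) : R :=
  (1 + 3*t) * ln (1 + 3*t) - (1 + 4*t) * ln (1 + 2*t) + (t - 1) * ln (1 + t).

Definition increment_gap' (t : R) : R :=
  3 * ln (1 + 3*t) + 3 - 4 * ln (1 + 2*t) - 2 * (1 + 4*t) / (1 + 2*t)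
  + ln (1 + t) + (t - 1) / (1 + t).

Definition increment_gap'' (t : R) : R :=
  9 / (1 + 3*t) - 8 / (1 + 2*t) - 4 / (1 + 2*t)^2 + 1 / (1 + t) + 2 / (1 + t)^2.

Lemma increment_gap_nonneg (t : R) : 0 <= t <= 1 -> 0 <= increment_gap t.
Proof.
  apply (nonneg_of_second_derivative _ increment_gap' increment_gap'' 1).
  - intros s Hs. apply is_derive_Reals. unfold increment_gap, increment_gap'.
    auto_derive; [repeat split; lra|].
    unfold Rminus. field. repeat split; lra.
  - intros s Hs. apply is_derive_Reals. unfold increment_gap', increment_gap''.
    auto_derive; [repeat split; lra|].
    unfold Rminus. field. repeat split; lra.
  - intros s Hs. unfold increment_gap''.
    replace (9 / (1 + 3*s) - 8 / (1 + 2*s) - 4 / (1 + 2*s)^2 + 1 / (1 + s) + 2 / (1 + s)^2)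
      with ((8*s^2 + 12*s^3) / ((1 + 3*s) * (1 + 2*s)^2 * (1 + s)^2)) by (field; lra).
    apply Rdiv_le_0_compat.
    + assert (0 <= s^2) by (apply pow_le; lra).
      assert (0 <= s^3) by (apply pow_le; lra). lra.
    + assert (0 < (1 + 2*s)^2) by (apply pow_lt; lra).
      assert (0 < (1 + s)^2) by (apply pow_lt; lra).
      repeat apply Rmult_lt_0_compat; lra.
  - unfold increment_gap. rewrite ?Rmult_0_r, ?Rplus_0_r, ln_1. ring.
  - unfold increment_gap'. rewrite ?Rmult_0_r, ?Rplus_0_r, ln_1. field.
Qed.

Lemma ln_shift (x c : R) : 0 < x -> 0 < x + c -> ln (x + c) = ln x + ln (1 + c * / x).
Proof.
  intros Hx Hxc. rewrite <- ln_mult; [| lra |].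
  - f_equal. field. lra.
  - replace (1 + c * / x) with ((x + c) / x) by (field; lra).
    apply Rdiv_lt_0_compat; lra.
Qed.

(* step_profile x governs the two-step increments of the log-volume profile
   (see [lam_step_profile]); it is nondecreasing for x >= 1 and midpoint
   concave with unit steps for x >= 2. *)
Definition step_profile (x : R) : R :=
  (x + 2) * ln (x + 2) - x * ln x - 2 * ln (x + 1).

Lemma step_profile_incr (x : R) : 1 <= x -> step_profile x <= step_profile (x + 1).
Proof.
  intros Hx.
  assert (Hinv : 0 < / x <= 1).
  { split; [apply Rinv_0_lt_compat; lra|].
    rewrite <- Rinv_1. apply Rinv_le_contravar; lra. }
  assert (Hgap := increment_gap_nonneg (/ x) ltac:(lra)).
  assert (E : step_profile (x + 1) - step_profile x = x * increment_gap (/ x)).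
  { unfold step_profile, increment_gap.
    replace (x + 1 + 2) with (x + 3) by ring. replace (x + 1 + 1) with (x + 2) by ring.
    rewrite (ln_shift x 3), (ln_shift x 2), (ln_shift x 1), Rmult_1_l by lra.
    field. lra. }
  nra.
Qed.

Lemma step_profile_concave (x : R) : 2 <= x ->
  step_profile (x - 1) + step_profile (x + 1) <= 2 * step_profile x.
Proof.
  intros Hx.
  assert (Hinv : 0 < / x <= 1/2).
  { split; [apply Rinv_0_lt_compat; lra|].
    replace (1/2) with (/2) by field. apply Rinv_le_contravar; lra. }
  assert (Hgap := concavity_gap_nonneg (/ x) ltac:(lra)).
  assert (E : 2 * step_profile x - step_profile (x - 1) - step_profile (x + 1)
              = x * concavity_gap (/ x)).
  { unfold step_profile, concavity_gap.
    replace (x - 1 + 2) with (x + 1) by ring. replace (x - 1 + 1) with x by ring.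
    replace (x + 1 + 2) with (x + 3) by ring. replace (x + 1 + 1) with (x + 2) by ring.
    replace (x - 1) with (x + -1) by ring. replace (1 - / x) with (1 + -1 * / x) by ring.
    rewrite (ln_shift x 3), (ln_shift x 2), (ln_shift x 1), (ln_shift x (-1)), Rmult_1_l by lra.
    field. lra. }
  nra.
Qed.

Lemma half_gamma_rec (k : nat) : half_gamma (S (S (S k))) = INR (S k) / 2 * half_gamma (S k).
Proof. reflexivity. Qed.

Lemma half_gamma_pos (m : nat) : (1 <= m)%nat -> 0 < half_gamma m.
Proof.
  intros Hm.
  assert (H : forall j, 0 < half_gamma (S j) /\ 0 < half_gamma (S (S j))).
  { induction j as [|j [IH1 IH2]].
    - split; simpl; [apply sqrt_lt_R0, PI_RGT_0 | lra].
    - split; [exact IH2|]. rewrite half_gamma_rec.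
      apply Rmult_lt_0_compat; [apply Rdiv_lt_0_compat; [apply lt_0_INR; lia | lra] | exact IH1]. }
  destruct m as [|m]; [lia|]. exact (proj1 (H m)).
Qed.

(* They satisfy
   W_0 = pi/2, W_1 = 1, (k+2) W_(k+2) = (k+1) W_k and W_(k+1) <= W_k, and
   W_k = (sqrt pi / 2) Gamma((k+1)/2) / Gamma(k/2 + 1); monotonicity of W
   is exactly the log-convexity of Gamma along half-integers. *)
Definition wallis (k : nat) : R := RInt (fun x => sin x ^ k) 0 (PI / 2).

Lemma ex_RInt_sin_pow (k : nat) : ex_RInt (fun x => sin x ^ k) 0 (PI / 2).
Proof.
  apply (ex_RInt_continuous (V := R_CompleteNormedModule)). intros z _.
  apply (@ex_derive_continuous R_AbsRing R_NormedModule). auto_derive. auto.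
Qed.

Lemma is_RInt_primitive (F f : R -> R) :
  (forall x, is_derive F x (f x)) -> (forall x, continuous f x) ->
  is_RInt f 0 (PI / 2) (F (PI / 2) - F 0).
Proof.
  intros DF Cf.
  apply (is_RInt_derive (V := R_CompleteNormedModule) F f).
  - intros x _. apply DF.
  - intros x _. apply Cf.
Qed.

Lemma wallis_0 : wallis 0 = PI / 2.
Proof.
  assert (H : is_RInt (fun _ => 1) 0 (PI / 2) (PI / 2 - 0)).
  { apply (is_RInt_primitive (fun x => x)).
    - intro x. auto_derive; auto.
    - intro x. apply continuous_const. }
  rewrite Rminus_0_r in H. apply is_RInt_unique.
  apply (is_RInt_ext (fun _ => 1)); [intros; simpl; auto | exact H].
Qed.

Lemma wallis_1 : wallis 1 = 1.
Proof.
  assert (H : is_RInt sin 0 (PI / 2) (- cos (PI / 2) - - cos 0)).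
  { apply (is_RInt_primitive (fun x => - cos x)).
    - intro x. auto_derive; auto. ring.
    - intro x. apply (@ex_derive_continuous R_AbsRing R_NormedModule). auto_derive. auto. }
  rewrite cos_PI2, cos_0 in H. apply is_RInt_unique.
  apply (is_RInt_ext sin); [intros; simpl; ring|].
  replace 1 with (- 0 - - 1) by ring. exact H.
Qed.

(* Integration by parts, via the primitive sin^(k+1) cos of
   (k+1) sin^k - (k+2) sin^(k+2). *)
Lemma wallis_rec (k : nat) : INR (S (S k)) * wallis (S (S k)) = INR (S k) * wallis k.
Proof.
  set (df := fun x => INR (S k) * sin x ^ k - INR (S (S k)) * sin x ^ (S (S k))).
  assert (H1 : is_RInt df 0 (PI / 2)
                 (sin (PI / 2) ^ (S k) * cos (PI / 2) - sin 0 ^ (S k) * cos 0)).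
  { apply (is_RInt_primitive (fun x => sin x ^ (S k) * cos x)).
    - intro x. unfold df. auto_derive; auto.
      change (match k with 0%nat => 1 | S _ => INR k + 1 end) with (INR (S k)).
      assert (Hc : cos x * cos x = 1 - sin x * sin x)
        by (pose proof (sin2_cos2 x); unfold Rsqr in *; lra).
      replace (1 * cos x * (INR (S k) * sin x ^ k) * cos x)
        with (INR (S k) * sin x ^ k * (cos x * cos x)) by ring.
      rewrite Hc, (S_INR (S k)).
      change (sin x ^ S (S k)) with (sin x * (sin x * sin x ^ k)). ring.
    - intro x. apply (@ex_derive_continuous R_AbsRing R_NormedModule).
      unfold df. auto_derive. auto. }
  assert (H2 : is_RInt df 0 (PI / 2) (INR (S k) * wallis k - INR (S (S k)) * wallis (S (S k)))).
  { apply (is_RInt_minus (V := R_CompleteNormedModule)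
             (fun x => scal (INR (S k)) (sin x ^ k))
             (fun x => scal (INR (S (S k))) (sin x ^ (S (S k))))).
    - apply (is_RInt_scal (V := R_CompleteNormedModule) (fun x => sin x ^ k)).
      apply RInt_correct, ex_RInt_sin_pow.
    - apply (is_RInt_scal (V := R_CompleteNormedModule) (fun x => sin x ^ (S (S k)))).
      apply RInt_correct, ex_RInt_sin_pow. }
  rewrite cos_PI2, sin_0, Rmult_0_r, pow_ne_zero, Rmult_0_l, Rminus_0_r in H1 by lia.
  pose proof (is_RInt_unique _ _ _ _ H1). pose proof (is_RInt_unique _ _ _ _ H2). lra.
Qed.

Lemma wallis_decr (k : nat) : wallis (S k) <= wallis k.
Proof.
  apply RInt_le; [pose proof PI_RGT_0; lra | apply ex_RInt_sin_pow | apply ex_RInt_sin_pow |].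
  intros x Hx. simpl.
  assert (0 < sin x) by (apply sin_gt_0; pose proof PI_RGT_0; lra).
  assert (sin x <= 1) by apply SIN_bound.
  assert (0 <= sin x ^ k) by (apply pow_le; lra). nra.
Qed.

Lemma wallis_half_gamma (k : nat) :
  wallis k = sqrt PI / 2 * half_gamma (S k) / half_gamma (S (S k)).
Proof.
  assert (Hs : sqrt PI * sqrt PI = PI) by (apply sqrt_sqrt; pose proof PI_RGT_0; lra).
  assert (Hs0 : 0 < sqrt PI) by (apply sqrt_lt_R0, PI_RGT_0).
  (* two consecutive values at a time, by the recursions of both sides *)
  assert (H : forall j,
    wallis j = sqrt PI / 2 * half_gamma (S j) / half_gamma (S (S j)) /\
    wallis (S j) = sqrt PI / 2 * half_gamma (S (S j)) / half_gamma (S (S (S j)))).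
  { induction j as [|j [IH1 IH2]].
    - split.
      + rewrite wallis_0. simpl. rewrite <- Hs at 1. field.
      + rewrite wallis_1, half_gamma_rec. simpl. field. lra.
    - split; [exact IH2|].
      assert (P1 := half_gamma_pos (S j) ltac:(lia)).
      assert (P2 := half_gamma_pos (S (S j)) ltac:(lia)).
      assert (Hn : 0 < INR (S (S j))) by (apply lt_0_INR; lia).
      assert (E : wallis (S (S j)) = INR (S j) / INR (S (S j)) * wallis j).
      { apply (Rmult_eq_reg_l (INR (S (S j)))); [|lra].
        rewrite wallis_rec. field. lra. }
      rewrite E, IH1, (half_gamma_rec (S j)), (half_gamma_rec j).
      field. repeat split; lra. }
  exact (proj1 (H k)).
Qed.

Lemma half_gamma_log_convex (k : nat) :
  half_gamma (S (S k)) * half_gamma (S (S k))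
  <= half_gamma (S k) * half_gamma (S (S (S k))).
Proof.
  assert (H := wallis_decr k). rewrite !wallis_half_gamma in H.
  assert (Hs0 : 0 < sqrt PI) by (apply sqrt_lt_R0, PI_RGT_0).
  assert (P1 := half_gamma_pos (S k) ltac:(lia)).
  assert (P2 := half_gamma_pos (S (S k)) ltac:(lia)).
  assert (P3 := half_gamma_pos (S (S (S k))) ltac:(lia)).
  set (A := half_gamma (S k)) in *. set (B := half_gamma (S (S k))) in *.
  set (C := half_gamma (S (S (S k)))) in *.
  assert (Hratio : B / C <= A / B).
  { apply (Rmult_le_reg_l (sqrt PI / 2)); [lra|]. unfold Rdiv in *. lra. }
  apply (Rmult_le_compat_r (B * C)) in Hratio; [|nra].
  replace (B / C * (B * C)) with (B * B) in Hratio by (field; lra).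
  replace (A / B * (B * C)) with (A * C) in Hratio by (field; lra).
  exact Hratio.
Qed.

Lemma ln_le_sub1 (x : R) : 0 < x -> ln x <= x - 1.
Proof. intros Hx. pose proof (exp_ineq1_le (ln x)). rewrite exp_ln in H; lra. Qed.

Lemma ln_lt_sub1 (x : R) : 0 < x -> x <> 1 -> ln x < x - 1.
Proof.
  intros Hx H1. assert (Hln : ln x <> 0).
  { intro E. apply H1. rewrite <- (exp_ln x Hx), E. apply exp_0. }
  pose proof (exp_ineq1 (ln x) Hln). rewrite exp_ln in H; lra.
Qed.

Lemma ln_diff_ge (a b : R) : 0 < a -> 0 < b -> 1 - b / a <= ln a - ln b.
Proof.
  intros Ha Hb. assert (H := ln_le_sub1 (b / a) ltac:(apply Rdiv_lt_0_compat; lra)).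
  rewrite ln_div in H; lra.
Qed.

Lemma nonneg_of_inverse_bounds (x : R) : (forall j : nat, - / (INR j + 1) <= x) -> 0 <= x.
Proof.
  intros H. destruct (Rle_lt_dec 0 x) as [|Hx]; [assumption|exfalso].
  destruct (archimed (- / x)) as [Hup _].
  assert (Hz : (0 <= up (- / x))%Z).
  { apply le_IZR. assert (0 < - / x) by (apply Ropp_0_gt_lt_contravar, Rinv_lt_0_compat; lra).
    lra. }
  specialize (H (Z.to_nat (up (- / x)))).
  rewrite INR_IZR_INZ, Z2Nat.id in H by assumption.
  assert (Hlt : / (IZR (up (- / x)) + 1) < / (- / x)).
  { apply Rinv_lt_contravar; [|lra].
    assert (0 < - / x) by (apply Ropp_0_gt_lt_contravar, Rinv_lt_0_compat; lra). nra. }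
  rewrite Rinv_opp, Rinv_inv in Hlt. lra.
Qed.

(* lgam k = ln Gamma((k+1)/2), and the profile
     lam k = (k/2) ln k - ln Gamma((k+1)/2),
   so that ln |S^k(sqrt(k/n))| = lam k - (k/2) ln n + ln 2 + ((k+1)/2) ln pi. *)
Definition lgam (k : nat) : R := ln (half_gamma (S k)).
Definition lam (k : nat) : R := INR k / 2 * ln (INR k) - lgam k.

Lemma lgam_rec (k : nat) : lgam (S (S k)) = ln (INR (S k)) - ln 2 + lgam k.
Proof.
  unfold lgam. rewrite half_gamma_rec.
  assert (P := half_gamma_pos (S k) ltac:(lia)).
  assert (0 < INR (S k)) by (apply lt_0_INR; lia).
  rewrite ln_mult, ln_div; [ring | lra | lra | apply Rdiv_lt_0_compat; lra | exact P].
Qed.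

Lemma lgam_convex (k : nat) : 2 * lgam (S k) <= lgam k + lgam (S (S k)).
Proof.
  unfold lgam. assert (H := half_gamma_log_convex k).
  assert (P1 := half_gamma_pos (S k) ltac:(lia)).
  assert (P2 := half_gamma_pos (S (S k)) ltac:(lia)).
  assert (P3 := half_gamma_pos (S (S (S k))) ltac:(lia)).
  apply ln_le in H; [|nra]. rewrite !ln_mult in H; lra.
Qed.

Definition lam_step (k : nat) : R := lam (S (S k)) - lam k.

Lemma lam_step_profile (k : nat) : lam_step k = step_profile (INR k) / 2 + ln 2.
Proof.
  unfold lam_step, lam, step_profile. rewrite lgam_rec, !S_INR.
  replace (INR k + 1 + 1) with (INR k + 2) by ring. field.
Qed.

Lemma lam_step_mono (k d : nat) : (1 <= k)%nat -> lam_step k <= lam_step (k + d).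
Proof.
  intros Hk. induction d as [|d IH]; [rewrite Nat.add_0_r; lra|].
  rewrite Nat.add_succ_r, !lam_step_profile, S_INR in *.
  assert (1 <= INR (k + d)) by (apply (le_INR 1); lia).
  pose proof (step_profile_incr (INR (k + d)) H). lra.
Qed.

(* It
   decreases along steps of 2 (concavity of the step profile) and is bounded
   below by ln m - ln (m+1) -> 0 (log-convexity of Gamma). *)
Definition lam_diff2 (m : nat) : R := lam m + lam (S (S m)) - 2 * lam (S m).

Lemma lam_diff2_step (m : nat) : (1 <= m)%nat -> lam_diff2 (S (S m)) <= lam_diff2 m.
Proof.
  intros Hm.
  assert (E : lam_diff2 (S (S m)) - lam_diff2 m
              = lam_step m + lam_step (S (S m)) - 2 * lam_step (S m))
    by (unfold lam_diff2, lam_step; ring).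
  rewrite !lam_step_profile, !S_INR in E.
  assert (1 <= INR m) by (apply (le_INR 1); lia).
  pose proof (step_profile_concave (INR m + 1) ltac:(lra)) as Hc.
  replace (INR m + 1 - 1) with (INR m) in Hc by ring. lra.
Qed.

(* With y = m + 1: convexity of lgam leaves the terms
   ((y+1)/2) (ln (y+1) - ln y) + ((y-1)/2) (ln (y-1) - ln y), each bounded
   below by the tangent-line bound. *)
Lemma lam_diff2_lower (m : nat) : (1 <= m)%nat -> ln (INR m) - ln (INR m + 1) <= lam_diff2 m.
Proof.
  intros Hm. destruct m as [|j]; [lia|].
  assert (Hc := lgam_convex j). assert (Hr1 := lgam_rec j). assert (Hr2 := lgam_rec (S j)).
  unfold lam_diff2, lam. rewrite Hr2.
  set (y := INR (S (S j))).
  assert (Ey1 : INR (S (S (S j))) = y + 1) by (unfold y; rewrite (S_INR (S (S j))); ring).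
  assert (Ey0 : INR (S j) = y - 1) by (unfold y; rewrite (S_INR (S j)); ring).
  rewrite Ey1, Ey0. rewrite Ey0 in Hr1.
  assert (Hy : 2 <= y) by (unfold y; rewrite !S_INR; pose proof (pos_INR j); lra).
  assert (A1 := ln_diff_ge (y + 1) y ltac:(lra) ltac:(lra)).
  assert (A2 := ln_diff_ge (y - 1) y ltac:(lra) ltac:(lra)).
  replace (1 - y / (y + 1)) with (/ (y + 1)) in A1 by (field; lra).
  replace (1 - y / (y - 1)) with (- / (y - 1)) in A2 by (field; lra).
  assert (B1 : 1 / 2 <= (y + 1) / 2 * (ln (y + 1) - ln y)).
  { replace (1 / 2) with ((y + 1) / 2 * / (y + 1)) by (field; lra).
    apply Rmult_le_compat_l; lra. }
  assert (B2 : -1 / 2 <= (y - 1) / 2 * (ln (y - 1) - ln y)).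
  { replace (-1 / 2) with ((y - 1) / 2 * - / (y - 1)) by (field; lra).
    apply Rmult_le_compat_l; lra. }
  replace (y - 1 + 1) with y by ring. nra.
Qed.

Lemma lam_diff2_nonneg (m : nat) : (1 <= m)%nat -> 0 <= lam_diff2 m.
Proof.
  intros Hm. apply nonneg_of_inverse_bounds. intros j.
  assert (Hdecr : forall i, lam_diff2 (m + 2 * i) <= lam_diff2 m).
  { induction i as [|i IH]; [rewrite Nat.mul_0_r, Nat.add_0_r; lra|].
    replace (m + 2 * S i)%nat with (S (S (m + 2 * i))) by lia.
    pose proof (lam_diff2_step (m + 2 * i) ltac:(lia)). lra. }
  assert (Hlow := lam_diff2_lower (m + 2 * j) ltac:(lia)).
  set (x := INR (m + 2 * j)) in *.
  assert (Hx : INR j + 1 <= x) by (unfold x; rewrite <- S_INR; apply le_INR; lia).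
  pose proof (pos_INR j).
  assert (A := ln_diff_ge x (x + 1) ltac:(lra) ltac:(lra)).
  replace (1 - (x + 1) / x) with (- / x) in A by (field; lra).
  assert (/ x <= / (INR j + 1)) by (apply Rinv_le_contravar; lra).
  specialize (Hdecr j). lra.
Qed.

(* The p-dependent part of ln |S^p(sqrt(p/n)) x S^(n-p)(sqrt((n-p)/n))|, and
   the corresponding part of ln (2 |S^n|) (see [clifford_vol_exp] and
   [two_sphere_vol_exp]). *)
Definition clifford_exponent (n p : nat) : R := lam p + lam (n - p).
Definition sphere_exponent (n : nat) : R := INR n / 2 * ln (INR n) - lgam n - ln PI / 2.

Lemma clifford_exponent_sym (n p : nat) : (p <= n)%nat ->
  clifford_exponent n (n - p) = clifford_exponent n p.
Proof. intros H. unfold clifford_exponent. replace (n - (n - p))%nat with p by lia. ring. Qed.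

Lemma clifford_exponent_step (n p : nat) : (1 <= p)%nat -> (2 * p + 2 <= n)%nat ->
  clifford_exponent n (p + 2) <= clifford_exponent n p.
Proof.
  intros H1 H2. unfold clifford_exponent.
  set (q := (n - p - 2)%nat).
  replace (n - p)%nat with (S (S q)) by (unfold q; lia).
  replace (n - (p + 2))%nat with q by (unfold q; lia).
  replace (p + 2)%nat with (S (S p)) by lia.
  assert (Hm := lam_step_mono p (q - p) H1).
  replace (p + (q - p))%nat with q in Hm by (unfold q; lia).
  unfold lam_step in Hm. lra.
Qed.

(* Base case p = 1: with n = j + 1, convexity of lgam reduces it to
   ln (pi/2) < j ln (1 + 1/j), and pi < 4 <= 2 (1 + 1/j)^j. *)
Lemma clifford_exponent_1 (n : nat) : (2 <= n)%nat -> clifford_exponent n 1 < sphere_exponent n.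
Proof.
  intros Hn. destruct n as [|j]; [lia|].
  assert (Hlam1 : lam 1 = 0) by (unfold lam, lgam; simpl; rewrite ln_1; ring).
  unfold clifford_exponent, sphere_exponent. rewrite Hlam1.
  replace (S j - 1)%nat with j by lia.
  assert (Hc := lgam_convex j). assert (Hr := lgam_rec j).
  assert (Hj : 1 <= INR j) by (apply (le_INR 1); lia).
  (* ln 2 <= j ln (1 + 1/j), by Bernoulli's inequality *)
  assert (B := Rle_pow_lin (/ INR j) j ltac:(left; apply Rinv_0_lt_compat; lra)).
  replace (1 + INR j * / INR j) with 2 in B by (field; lra).
  replace (1 + / INR j) with (INR (S j) / INR j) in B by (rewrite S_INR; field; lra).
  apply ln_le in B; [|lra].
  rewrite ln_pow, ln_div in B by (rewrite ?S_INR; try apply Rdiv_lt_0_compat; lra).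
  assert (Hpi : ln PI < 2 * ln 2).
  { assert (PI < 4).
    { destruct (PI_ineq 1) as [_ H]. unfold tg_alt, PI_tg in H. simpl in H. lra. }
    replace (2 * ln 2) with (ln (2 * 2)) by (rewrite ln_mult; lra).
    apply ln_increasing; [apply PI_RGT_0 | lra]. }
  unfold lam. rewrite S_INR in *. nra.
Qed.

(* Base case p = 2: with n = j + 2, it reduces to
   ln (2(j+1)/(j+2)) < (j/2) ln ((j+2)/j), by two tangent-line bounds. *)
Lemma clifford_exponent_2 (n : nat) : (4 <= n)%nat -> clifford_exponent n 2 < sphere_exponent n.
Proof.
  intros Hn. set (j := (n - 2)%nat). replace n with (S (S j)) by (unfold j; lia).
  assert (Hlam2 : lam 2 = 2 * ln 2 - ln PI / 2).
  { assert (Hsqrt : ln (sqrt PI) = ln PI / 2)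
      by (rewrite <- (Rpower_sqrt PI PI_RGT_0), ln_Rpower; field).
    unfold lam, lgam. change (half_gamma 3) with (INR 1 / 2 * sqrt PI).
    rewrite ln_mult, ln_div, Hsqrt by (simpl; try apply sqrt_lt_R0, PI_RGT_0; lra).
    simpl INR. replace (1 + 1) with 2 by ring. rewrite ln_1. field. }
  unfold clifford_exponent, sphere_exponent. rewrite Hlam2, lgam_rec.
  replace (S (S j) - 2)%nat with j by lia. unfold lam.
  assert (Hj : 2 <= INR j) by (apply (le_INR 2); unfold j; lia).
  rewrite !S_INR.
  (* (j/2) (ln (j+2) - ln j) >= j/(j+2) > ln (2(j+1)/(j+2)) *)
  assert (A := ln_diff_ge (INR j + 1 + 1) (INR j) ltac:(lra) ltac:(lra)).
  replace (1 - INR j / (INR j + 1 + 1)) with (2 / (INR j + 1 + 1)) in A by (field; lra).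
  assert (B : INR j / (INR j + 1 + 1) <= INR j / 2 * (ln (INR j + 1 + 1) - ln (INR j))).
  { replace (INR j / (INR j + 1 + 1)) with (INR j / 2 * (2 / (INR j + 1 + 1))) by (field; lra).
    apply Rmult_le_compat_l; lra. }
  assert (C := ln_lt_sub1 (2 * (INR j + 1) / (INR j + 1 + 1))
                 ltac:(apply Rdiv_lt_0_compat; lra)).
  assert (Cne : 2 * (INR j + 1) / (INR j + 1 + 1) <> 1).
  { intro E. apply (f_equal (fun t => t * (INR j + 1 + 1))) in E.
    replace (2 * (INR j + 1) / (INR j + 1 + 1) * (INR j + 1 + 1)) with (2 * (INR j + 1)) in E
      by (field; lra). lra. }
  specialize (C Cne).
  rewrite ln_div, ln_mult in C by lra.
  replace (2 * (INR j + 1) / (INR j + 1 + 1) - 1) with (INR j / (INR j + 1 + 1)) in C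
    by (field; lra).
  nra.
Qed.

(* First inequality, in exponent form: by the two base cases p = 1, 2 and
   the two-step monotonicity, for every 1 <= p <= n/2, then by symmetry. *)
Lemma clifford_exponent_lt_sphere (n p : nat) :
  (1 <= p)%nat -> (p <= n - 1)%nat -> clifford_exponent n p < sphere_exponent n.
Proof.
  assert (Hhalf : forall q, (1 <= q)%nat -> (2 * q <= n)%nat ->
                  clifford_exponent n q < sphere_exponent n).
  { intro q. induction q as [q IH] using (well_founded_induction lt_wf). intros H1 H2.
    destruct (Nat.eq_dec q 1) as [->|N1]; [apply clifford_exponent_1; lia|].
    destruct (Nat.eq_dec q 2) as [->|N2]; [apply clifford_exponent_2; lia|].
    assert (Hs := clifford_exponent_step n (q - 2) ltac:(lia) ltac:(lia)).
    replace (q - 2 + 2)%nat with q in Hs by lia.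
    assert (IH' := IH (q - 2)%nat ltac:(lia) ltac:(lia) ltac:(lia)). lra. }
  intros H1 H2. destruct (Nat.le_gt_cases (2 * p) n).
  - apply Hhalf; lia.
  - rewrite <- clifford_exponent_sym by lia. apply Hhalf; lia.
Qed.

(* Second inequality, in exponent form: the exponent is minimal at p = n/2.
   Walk from p to n/2 in steps of 2; a final single step is either a step of
   2 across the middle (n odd) or discrete convexity of lam (n even). *)
Lemma clifford_exponent_min (n p : nat) :
  (1 <= p)%nat -> (p <= n - 1)%nat -> clifford_exponent n (n / 2) <= clifford_exponent n p.
Proof.
  pose proof (Nat.div_mod n 2 ltac:(lia)) as Hdiv.
  pose proof (Nat.mod_upper_bound n 2 ltac:(lia)) as Hmod.
  assert (Hhalf : forall d q, (n / 2 - q = d)%nat -> (1 <= q)%nat -> (2 * q <= n)%nat ->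
                  clifford_exponent n (n / 2) <= clifford_exponent n q).
  { intro d. induction d as [d IH] using (well_founded_induction lt_wf). intros q Hd H1 H2.
    destruct (Nat.eq_dec d 0) as [->|N0]; [replace (n / 2)%nat with q by lia; lra|].
    assert (Hs := clifford_exponent_step n q H1 ltac:(lia)).
    destruct (Nat.eq_dec d 1) as [->|N1].
    - destruct (Nat.Even_or_Odd n) as [[b Hb]|[b Hb]].
      + assert (Hconv := lam_diff2_nonneg q H1).
        unfold lam_diff2, clifford_exponent in *.
        replace (n / 2)%nat with (S q) by lia.
        replace (n - q)%nat with (S (S q)) by lia. replace (n - S q)%nat with (S q) by lia. lra.
      + unfold clifford_exponent in *.
        replace (n - (q + 2))%nat with (n / 2)%nat in Hs by lia.
        replace (q + 2)%nat with (n - n / 2)%nat in Hs by lia. lra.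
    - assert (IH' := IH (d - 2)%nat ltac:(lia) (q + 2)%nat ltac:(lia) ltac:(lia) ltac:(lia)).
      lra. }
  intros H1 H2. destruct (Nat.le_gt_cases (2 * p) n).
  - apply (Hhalf (n / 2 - p)%nat); lia.
  - rewrite <- (clifford_exponent_sym n p) by lia. apply (Hhalf (n / 2 - (n - p))%nat); lia.
Qed.

Lemma sqrt_pow_exp (x : R) (k : nat) : 0 < x -> sqrt x ^ k = exp (INR k * (ln x / 2)).
Proof.
  intros Hx. rewrite <- (Rpower_sqrt x Hx). unfold Rpower at 1.
  rewrite <- Rpower_pow by apply exp_pos. unfold Rpower. rewrite ln_exp. f_equal. field.
Qed.

Lemma scaled_sphere_vol_exp (n k : nat) : (1 <= k)%nat -> (1 <= n)%nat ->
  sqrt (INR k / INR n) ^ k * sphere_vol k =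
  exp (lam k - INR k / 2 * ln (INR n) + ln 2 + (INR k + 1) / 2 * ln PI).
Proof.
  intros Hk Hn.
  assert (0 < INR k) by (apply lt_0_INR; lia). assert (0 < INR n) by (apply lt_0_INR; lia).
  assert (P := half_gamma_pos (S k) ltac:(lia)).
  rewrite sqrt_pow_exp, ln_div by (try apply Rdiv_lt_0_compat; lra).
  unfold sphere_vol, Rpower. rewrite Nat.add_1_r, S_INR.
  replace (2 * exp ((INR k + 1) / 2 * ln PI) / half_gamma (S k))
    with (exp (ln 2) * exp ((INR k + 1) / 2 * ln PI) * exp (- ln (half_gamma (S k))))
    by (rewrite exp_Ropp, !exp_ln by lra; field; lra).
  rewrite <- !exp_plus. f_equal. unfold lam, lgam. field.
Qed.

Lemma clifford_vol_exp (n p : nat) : (1 <= p)%nat -> (p <= n - 1)%nat ->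
  clifford_vol n p
  = exp (clifford_exponent n p - INR n / 2 * ln (INR n) + 2 * ln 2 + (INR n + 2) / 2 * ln PI).
Proof.
  intros H1 H2. unfold clifford_vol, prod_sphere_vol, sphere_vol_r.
  rewrite (scaled_sphere_vol_exp n p), (scaled_sphere_vol_exp n (n - p)), <- exp_plus by lia.
  f_equal. unfold clifford_exponent. rewrite minus_INR by lia. field.
Qed.

Lemma two_sphere_vol_exp (n : nat) :
  2 * sphere_vol n = exp (2 * ln 2 + (INR n + 1) / 2 * ln PI - lgam n).
Proof.
  assert (P := half_gamma_pos (S n) ltac:(lia)).
  unfold sphere_vol, Rpower. rewrite Nat.add_1_r, S_INR.
  replace (2 * (2 * exp ((INR n + 1) / 2 * ln PI) / half_gamma (S n)))
    with (exp (ln 2) * exp (ln 2) * exp ((INR n + 1) / 2 * ln PI) * exp (- lgam n))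
    by (unfold lgam; rewrite exp_Ropp, !exp_ln by lra; field; lra).
  rewrite <- !exp_plus. f_equal. ring.
Qed.

Lemma exp_le_mono (x y : R) : x <= y -> exp x <= exp y.
Proof. intros [Hlt | ->]; [left; apply exp_increasing, Hlt | right; reflexivity]. Qed.

Theorem mainTheorem13 (n p : nat) (hn : (2 <= n)%nat) (hp1 : (1 <= p)%nat)
  (hp2 : (p <= n - 1)%nat) :
  2 * sphere_vol n > clifford_vol n p /\
  clifford_vol n p >=
    prod_sphere_vol (n / 2) (sqrt (INR (n / 2) / INR n))
                    ((n + 1) / 2) (sqrt (INR ((n + 1) / 2) / INR n)).
Proof.
  pose proof (Nat.div_mod n 2 ltac:(lia)). pose proof (Nat.mod_upper_bound n 2 ltac:(lia)).
  split.
  - rewrite clifford_vol_exp, two_sphere_vol_exp by lia. apply Rlt_gt, exp_increasing.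
    assert (Hlt := clifford_exponent_lt_sphere n p hp1 hp2).
    unfold sphere_exponent in Hlt. lra.
  - (* the right-hand side is the Clifford torus with p = n/2, since ceil(n/2) = n - n/2 *)
    replace ((n + 1) / 2)%nat with (n - n / 2)%nat
      by (pose proof (Nat.div_mod (n + 1) 2 ltac:(lia));
          pose proof (Nat.mod_upper_bound (n + 1) 2 ltac:(lia)); lia).
    change (prod_sphere_vol (n / 2) (sqrt (INR (n / 2) / INR n)) (n - n / 2)
              (sqrt (INR (n - n / 2) / INR n))) with (clifford_vol n (n / 2)).
    rewrite !clifford_vol_exp by lia. apply Rle_ge, exp_le_mono.
    pose proof (clifford_exponent_min n p hp1 hp2). lra.
Qed.
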